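(* Let $\mathbbm{k}$ be an algebraically closed field of characteristic $0$, and let $\mathscr{A}_2$ be the connected cochain DG algebra whose underlying graded algebra is the free algebra $\mathbbm{k}\langle y_1,y_2,y_3\rangle$ with $|y_1|=|y_2|=|y_3|=1$, and whose differential is determined by $\partial(y_1)=y_3^2$, $\partial(y_2)=y_1y_3+y_3y_1$, $\partial(y_3)=0$ (extended by the graded Leibniz rule). Then $$H(\mathscr{A}_2)=\frac{\mathbbm{k}[\lceil y_3\rceil,\lceil y_1^2+y_2y_3+y_3y_2\rceil]}{(\lceil y_3\rceil^2 )},$$ i.e. the cohomology ring is the commutative algebra generated by $\lceil y_3\rceil$ (degree $1$) and $\lceil y_1^2+y_2y_3+y_3y_2\rceil$ (degree $2$) subject only to $\lceil y_3\rceil^2=0$.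
   Context: A cochain DG algebra is a $\mathbb{Z}$-graded algebra with a degree $1$ differential $\partial$ satisfying $\partial^2=0$ and $\partial(ab)=\partial(a)b+(-1)^{|a|}a\partial(b)$. For a cocycle $z$, $\lceil z\rceil$ denotes its cohomology class. *)

From mathcomp Require Import all_boot all_algebra.
Set Implicit Arguments. Unset Strict Implicit. Unset Printing Implicit Defensive.
Import GRing.Theory.
Local Open Scope ring_scope.

(* Words in the three letters y_1, y_2, y_3 (encoded as 0, 1, 2 : 'I_3). *)
Definition word := seq 'I_3.

(* Noncommutative formal series k<<y1,y2,y3>>: coefficient function on words.
   The free algebra k<y1,y2,y3> (all y_i of degree 1) is the direct sum of its
   homogeneous components; a homogeneous element of degree n is exactly a
   series supported on words of length n (finitely many words). *)
Definition series (K : fieldType) := word -> K.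

Section FreeAlg.
Variable K : fieldType.

Definition homog (n : nat) (f : series K) : Prop :=
  forall w : word, size w <> n -> f w = 0.

Definition sadd (f g : series K) : series K := fun w => f w + g w.
Definition ssub (f g : series K) : series K := fun w => f w - g w.
Definition sscale (c : K) (f : series K) : series K := fun w => c * f w.
Definition szero : series K := fun _ => 0.
Definition sone : series K := fun w => (w == [::])%:R.
Definition smul (f g : series K) : series K :=
  fun w => \sum_(i < (size w).+1) f (take i w) * g (drop i w).
Definition spow (f : series K) (m : nat) : series K := iter m (smul f) sone.
Definition gen (k : 'I_3) : series K := fun w => (w == [:: k])%:R.

(* The unique derivation of degree 1 with the graded Leibniz rule
   d(ab) = d(a) b + (-1)^|a| a d(b) (all generators of degree 1) and
   d(y_k) = dy k.  On a word u y_k t it gives (-1)^|u| u (dy k) t;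
   below is the coefficient of the word w = u v t in d(f). *)
Definition der (dy : 'I_3 -> series K) (f : series K) : series K :=
  fun w => \sum_(i < (size w).+1) \sum_(j < (size w).+1 | (i <= j)%N)
             \sum_(k < 3)
               (-1) ^+ i * dy k (drop i (take j w)) * f (take i w ++ k :: drop j w).

Definition y1 : series K := gen 0.
Definition y2 : series K := gen 1.
Definition y3 : series K := gen 2.

Definition A2_dgen (k : 'I_3) : series K :=
  match nat_of_ord k with
  | 0%N => smul y3 y3
  | 1%N => sadd (smul y1 y3) (smul y3 y1)
  | _ => szero
  end.

Definition dA2 : series K -> series K := der A2_dgen.

Definition cocycle (n : nat) (f : series K) : Prop :=
  homog n f /\ forall w, dA2 f w = 0.
Definition coboundary (n : nat) (f : series K) : Prop :=
  exists g : series K, homog n.-1 g /\ forall w, f w = dA2 g w.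
Definition cohomologous (n : nat) (f g : series K) : Prop :=
  coboundary n (ssub f g).

Definition zA2 : series K := sadd (smul y1 y1) (sadd (smul y2 y3) (smul y3 y2)).

(* image in A_2 of the monomial of degree n of k[a,b]/(a^2):
   b^(n/2) if n even, a b^((n-1)/2) if n odd, with a |-> y3, b |-> z *)
Definition monA2 (n : nat) : series K :=
  if odd n then smul y3 (spow zA2 n./2) else spow zA2 n./2.

End FreeAlg.

(* Every two-letter word occurs in at most one d(y_k), with coefficient 1
   (y3 y3 in d(y1), y1 y3 and y3 y1 in d(y2)), so the coefficient of a word in
   d f is computed by peeling off its first letter.  On words of length >= 2,
   the map h = htpy replacing a leading y1 by y3 y3 and a leading y2 by y3 y1
   satisfies f = z P(f) + d h f + h d f, where P(f) u = zquot f u is the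
   coefficient of y3 y2 u in f.  Hence a cocycle f of degree n + 2 is
   cohomologous to z P(f) with P(f) a cocycle of degree n, and induction from
   degrees 0 and 1 (where the cocycles are the multiples of 1 and of y3) shows
   that every cocycle is cohomologous to a multiple of z^m or y3 z^m; here
   z y3 z^m and y3 z^(m+1) differ by a coboundary because
   y3 z - z y3 = d(y1 y2 + y2 y1).  No d(y_k) contains y2 y3 or y3 y2, so every
   coboundary vanishes on the word y3 y2 y3 y2 ..., on which these monomials
   have coefficient 1.  The argument works over any field. *)

From mathcomp Require Import all_boot all_algebra.
From mathcomp Require Import ring.
Set Implicit Arguments. Unset Strict Implicit. Unset Printing Implicit Defensive.
Import GRing.Theory.
Local Open Scope ring_scope.

Definition a1 : 'I_3 := @Ordinal 3 0 isT.
Definition a2 : 'I_3 := @Ordinal 3 1 isT.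
Definition a3 : 'I_3 := @Ordinal 3 2 isT.

Lemma ord3P (a : 'I_3) : a = a1 \/ a = a2 \/ a = a3.
Proof. by case: a => -[|[|[|?]]] ?; [left|right; left|right; right|]; try apply/val_inj. Qed.

Lemma sum_ord3 (R : zmodType) (F : 'I_3 -> R) : \sum_(k < 3) F k = F a1 + F a2 + F a3.
Proof. by rewrite !big_ord_recr big_ord0 /= add0r; congr (F _ + F _ + F _); apply/val_inj. Qed.

Section FreeAlgebra.
Variable K : fieldType.
Local Notation series := (series K).

Lemma gen1E : gen K (1 : 'I_3) = gen K a2. Proof. by congr gen; apply/val_inj. Qed.

Lemma smul_homogl k (f g : series) w : homog k f ->
  smul f g w = if (k <= size w)%N then f (take k w) * g (drop k w) else 0.
Proof.
move=> hf; rewrite /smul; case: leqP => [le_k|lt_w].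
  rewrite (bigD1 (Ordinal (_ : k < (size w).+1)%N)) ?ltnS //= big1 ?addr0 // => i ne_ik.
  rewrite hf ?mul0r // size_takel; last by rewrite -ltnS.
  by move=> eq_ik; move/eqP: ne_ik; apply; apply/val_inj.
apply: big1 => i _; rewrite hf ?mul0r // size_takel; last by rewrite -ltnS.
by move=> eq_ik; move: (ltn_ord i); rewrite eq_ik ltnS leqNgt lt_w.
Qed.

Lemma gen_homog (a : 'I_3) : homog 1 (gen K a).
Proof. by move=> w; rewrite /gen; case: eqP => // ->. Qed.

Lemma smul_gen (a b : 'I_3) w : smul (gen K a) (gen K b) w = (w == [:: a; b])%:R.
Proof.
rewrite (smul_homogl _ _ (gen_homog a)); case: w => [|x u] //=.
by rewrite take0 drop0 /gen eqseq_cons andbT -natrM mulnb -eqseq_cons.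
Qed.

Definition lquot (a : 'I_3) (f : series) : series := fun u => f (a :: u).

Section Derivation.
Variable dy : 'I_3 -> series.

Lemma der_ext f g w : (forall u, f u = g u) -> der dy f w = der dy g w.
Proof.
by move=> eq_fg; apply: eq_bigr => i _; apply: eq_bigr => j _; apply: eq_bigr => k _;
  rewrite eq_fg.
Qed.

Lemma der_cons f a w : der dy f (a :: w) =
  \sum_(j < (size w).+2) \sum_(k < 3) dy k (take j (a :: w)) * f (k :: drop j (a :: w))
  - der dy (lquot a f) w.
Proof.
rewrite /der /= big_ord_recl /=; congr (_ + _).
  rewrite (eq_bigl xpredT) //; apply: eq_bigr => j _; apply: eq_bigr => k _.
  by rewrite expr0 mul1r drop0.
rewrite -sumrN; apply: eq_bigr => i _.
rewrite big_mkcond big_ord_recl /= add0r [in RHS]big_mkcond -sumrN; apply: eq_bigr => j _.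
rewrite /bump /= !add1n ltnS; case: ifP => _; last by rewrite oppr0.
by rewrite -sumrN; apply: eq_bigr => k _; rewrite exprS /lquot; ring.
Qed.

Hypothesis dy_quadratic : forall k u, size u <> 2%N -> dy k u = 0.

Lemma der_nil f : der dy f [::] = 0.
Proof.
by apply: big1 => i _; apply: big1 => j _; apply: big1 => k _;
  rewrite dy_quadratic ?mulr0 ?mul0r.
Qed.

Lemma der_cons2 f a b v : der dy f [:: a, b & v] =
  \sum_(k < 3) dy k [:: a; b] * f (k :: v) - der dy (lquot a f) (b :: v).
Proof.
rewrite der_cons (bigD1 (Ordinal (_ : 2 < (size v).+3)%N)) //= take0 drop0.
rewrite [X in _ + X - _]big1 ?addr0 // => j ne_j2.
apply: big1 => k _; rewrite dy_quadratic ?mul0r // size_takel; last by rewrite -ltnS.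
by move=> eq_j2; move/eqP: ne_j2; apply; apply/val_inj.
Qed.

Lemma der_1 f a : der dy f [:: a] = 0.
Proof.
rewrite der_cons der_nil subr0; apply: big1 => j _; apply: big1 => k _.
by rewrite dy_quadratic ?mul0r // size_takel; case: j => -[|[|]].
Qed.

End Derivation.

Definition dgen_of (a b : 'I_3) : option 'I_3 :=
  match nat_of_ord a, nat_of_ord b with
  | 2, 2 => Some a1 | 0, 2 => Some a2 | 2, 0 => Some a2 | _, _ => None
  end.

Definition dlead (f : series) a b v : K :=
  if dgen_of a b is Some k then f (k :: v) else 0.

Lemma A2_dgen_quadratic k u : size u <> 2%N -> A2_dgen K k u = 0.
Proof.
move=> size_u; have neq_u a b : (u == [:: a; b]) = false.
  by apply/eqP => eq_u; rewrite eq_u in size_u.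
rewrite /A2_dgen; case: k => -[|[|m]] ? /=.
- by rewrite /y3 smul_gen neq_u.
- by rewrite /sadd /y1 /y3 !smul_gen !neq_u addr0.
- by [].
Qed.

Lemma sum_A2_dgen f a b v :
  \sum_(k < 3) A2_dgen K k [:: a; b] * f (k :: v) = dlead f a b v.
Proof.
rewrite sum_ord3 /A2_dgen /= /sadd /y1 /y3 !smul_gen /dlead.
by case: (ord3P a) => [->|[->|->]]; case: (ord3P b) => [->|[->|->]] /=;
  rewrite /szero; ring.
Qed.

Lemma dA2_ext (f g : series) w : (forall u, f u = g u) -> dA2 f w = dA2 g w.
Proof. exact: der_ext. Qed.

Lemma dA2_nil (f : series) : dA2 f [::] = 0.
Proof. exact/der_nil/A2_dgen_quadratic. Qed.

Lemma dA2_1 (f : series) a : dA2 f [:: a] = 0.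
Proof. exact/der_1/A2_dgen_quadratic. Qed.

Lemma dA2_cons2 (f : series) a b v :
  dA2 f [:: a, b & v] = dlead f a b v - dA2 (lquot a f) (b :: v).
Proof. by rewrite /dA2 der_cons2 ?sum_A2_dgen //; exact: A2_dgen_quadratic. Qed.

Lemma dA2_lin x y (f g : series) w :
  dA2 (fun u => x * f u + y * g u) w = x * dA2 f w + y * dA2 g w.
Proof.
elim: w f g => [|a w IHw] f g; first by rewrite !dA2_nil; ring.
case: w IHw => [|b v] IHw; first by rewrite !dA2_1; ring.
by rewrite !dA2_cons2 IHw /dlead; case: dgen_of => [k|]; ring.
Qed.

Lemma dA2_sadd (f g : series) w : dA2 (sadd f g) w = dA2 f w + dA2 g w.
Proof.
by rewrite (@dA2_ext _ (fun u => 1 * f u + 1 * g u)) ?dA2_lin => [|u]; rewrite ?mul1r.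
Qed.

Lemma dA2_sscale c (f : series) w : dA2 (sscale c f) w = c * dA2 f w.
Proof.
by rewrite (@dA2_ext _ (fun u => c * f u + 0 * f u)) ?dA2_lin => [|u]; rewrite ?mul0r ?addr0.
Qed.

Lemma dA2_eq0 (f : series) w : (forall u, f u = 0) -> dA2 f w = 0.
Proof.
move=> f0; rewrite (@dA2_ext _ (sscale 0 f)) ?dA2_sscale ?mul0r // => u.
by rewrite f0 /sscale mul0r.
Qed.

Lemma homog_sadd n (f g : series) : homog n f -> homog n g -> homog n (sadd f g).
Proof. by move=> hf hg w size_w; rewrite /sadd hf ?hg ?addr0. Qed.

Lemma homog_sscale n c (f : series) : homog n f -> homog n (sscale c f).
Proof. by move=> hf w size_w; rewrite /sscale hf ?mulr0. Qed.

Lemma homog_lquot n a (f : series) : homog n.+1 f -> homog n (lquot a f).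
Proof. by move=> hf u size_u; rewrite /lquot hf //= => -[]. Qed.

Lemma dA2_homog m (f : series) w : homog m f -> size w <> m.+1 -> dA2 f w = 0.
Proof.
elim: w m f => [|a w IHw] m f hf size_w; first by rewrite dA2_nil.
case: w IHw size_w => [|b v] IHw size_w; first by rewrite dA2_1.
rewrite dA2_cons2; case: m hf size_w => [|m] hf size_w.
  rewrite dA2_eq0 => [|u]; last by rewrite /lquot hf.
  by rewrite /dlead; case: dgen_of => [k|]; rewrite ?hf ?subr0.
rewrite (IHw m) ?subr0.
- rewrite /dlead; case: dgen_of => // k.
  by rewrite hf //= => -[eq_m]; apply: size_w; rewrite /= eq_m.
- exact: homog_lquot.
- by move=> eq_m; apply: size_w; rewrite /= -eq_m.
Qed.

Lemma dA2_homog0 (f : series) w : homog 0 f -> dA2 f w = 0.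
Proof.
move=> hf; case: w => [|a [|b v]]; rewrite ?dA2_nil ?dA2_1 //.
exact: dA2_homog hf _.
Qed.

(* Elements of degree <= 3 are handled through their coefficient functions:
   lmul2 c g is the product (\sum_(x, y) c x y * y_x y_y) * g. *)
Definition lmul1 (e : 'I_3 -> K) (g : series) : series :=
  fun w => if w is x :: u then e x * g u else 0.
Definition lmul2 (c : 'I_3 -> 'I_3 -> K) (g : series) : series :=
  fun w => if w is [:: x, y & u] then c x y * g u else 0.
Definition lmul3 (c : 'I_3 -> 'I_3 -> 'I_3 -> K) (g : series) : series :=
  fun w => if w is [:: x, y, z & u] then c x y z * g u else 0.

Definition dcoef1 (e : 'I_3 -> K) x y : K :=
  if dgen_of x y is Some k then e k else 0.
Definition dcoef2 (c : 'I_3 -> 'I_3 -> K) x y z : K :=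
  (if dgen_of x y is Some k then c k z else 0)
  - (if dgen_of y z is Some k then c x k else 0).

Lemma lmul1_ext e (g g' : series) w :
  (forall u, g u = g' u) -> lmul1 e g w = lmul1 e g' w.
Proof. by move=> eq_g; case: w => //= x u; rewrite eq_g. Qed.

Lemma lmul2_ext c (g g' : series) w :
  (forall u, g u = g' u) -> lmul2 c g w = lmul2 c g' w.
Proof. by move=> eq_g; case: w => [|x [|y u]] //=; rewrite eq_g. Qed.

Lemma lmul1_eq0r e (g : series) w : (forall u, g u = 0) -> lmul1 e g w = 0.
Proof. by move=> g0; case: w => [|x u] //=; rewrite g0 mulr0. Qed.

Lemma lmul2_eq0r c (g : series) w : (forall u, g u = 0) -> lmul2 c g w = 0.
Proof. by move=> g0; case: w => [|x [|y u]] //=; rewrite g0 mulr0. Qed.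

Lemma lmul2_eq0l c (g : series) w : (forall x y, c x y = 0) -> lmul2 c g w = 0.
Proof. by move=> c0; case: w => [|x [|y u]] //=; rewrite c0 mul0r. Qed.

Lemma lmul3_eq0l c (g : series) w : (forall x y z, c x y z = 0) -> lmul3 c g w = 0.
Proof. by move=> c0; case: w => [|x [|y [|z u]]] //=; rewrite c0 mul0r. Qed.

Lemma homog_lmul1 m e (g : series) : homog m g -> homog m.+1 (lmul1 e g).
Proof.
by move=> hg [|x u] //= size_u; rewrite hg ?mulr0 // => eq_m; apply: size_u; rewrite eq_m.
Qed.

Lemma homog_lmul2 m c (g : series) : homog m g -> homog m.+2 (lmul2 c g).
Proof.
by move=> hg [|x [|y u]] //= size_u; rewrite hg ?mulr0 // => eq_m; apply: size_u; rewrite eq_m.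
Qed.

Lemma dA2_lmul1 e (g : series) w :
  dA2 (lmul1 e g) w = lmul2 (dcoef1 e) g w - lmul1 e (dA2 g) w.
Proof.
case: w => [|x [|y v]]; rewrite ?dA2_nil ?dA2_1 /= ?dA2_nil ?mulr0 ?subr0 //.
rewrite dA2_cons2 /dlead /dcoef1 (@dA2_ext _ (sscale (e x) g)) // dA2_sscale.
by case: dgen_of => [k|] /=; ring.
Qed.

Lemma dA2_lmul2 c (g : series) w :
  dA2 (lmul2 c g) w = lmul3 (dcoef2 c) g w + lmul2 c (dA2 g) w.
Proof.
case: w => [|x [|y [|z v]]]; rewrite ?dA2_nil ?dA2_1 /= ?addr0 //.
  by rewrite dA2_cons2 dA2_1 /dlead; case: dgen_of => *; rewrite /= dA2_nil; ring.
rewrite !dA2_cons2 /dlead /dcoef2 (@dA2_ext (lquot y _) (sscale (c x y) g)) // dA2_sscale.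
by case: (dgen_of x y) => [k|]; case: (dgen_of y z) => [k'|]; rewrite /lquot /=; ring.
Qed.

Definition y3coef (a : 'I_3) : K := if nat_of_ord a is 2 then 1 else 0.
Definition zcoef (a b : 'I_3) : K :=
  match nat_of_ord a, nat_of_ord b with 0, 0 | 1, 2 | 2, 1 => 1 | _, _ => 0 end.
Definition qcoef (a b : 'I_3) : K :=
  match nat_of_ord a, nat_of_ord b with 0, 1 | 1, 0 => 1 | _, _ => 0 end.

Lemma dcoef1_y3coef x y : dcoef1 y3coef x y = 0.
Proof. by case: (ord3P x) => [->|[->|->]]; case: (ord3P y) => [->|[->|->]]. Qed.

Lemma dcoef2_zcoef x y z : dcoef2 zcoef x y z = 0.
Proof.
by case: (ord3P x) => [->|[->|->]]; case: (ord3P y) => [->|[->|->]];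
  case: (ord3P z) => [->|[->|->]]; rewrite /dcoef2 /= ?subrr ?subr0.
Qed.

Lemma y3coef_zcoef x y z :
  y3coef x * zcoef y z = zcoef x y * y3coef z + dcoef2 qcoef x y z.
Proof.
by case: (ord3P x) => [->|[->|->]]; case: (ord3P y) => [->|[->|->]];
  case: (ord3P z) => [->|[->|->]]; rewrite /dcoef2 /y3coef /zcoef /qcoef /=; ring.
Qed.

Lemma sone_homog : homog 0 (sone K).
Proof. by case. Qed.

Lemma y3E w : y3 K w = lmul1 y3coef (sone K) w.
Proof.
case: w => [|x [|y u]] //=; last by rewrite /y3 /gen eqseq_cons andbF /sone mulr0.
by rewrite /sone mulr1 /y3 /gen; case: (ord3P x) => [->|[->|->]].
Qed.

Lemma zA2E w : zA2 K w = lmul2 zcoef (sone K) w.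
Proof.
rewrite /zA2 /sadd /y1 /y2 /y3 gen1E !smul_gen.
case: w => [|x [|y [|t u]]] //=; rewrite ?eqseq_cons ?andbF ?addr0 //;
  last by rewrite /sone mulr0.
rewrite /sone mulr1; case: (ord3P x) => [->|[->|->]]; case: (ord3P y) => [->|[->|->]] /=;
  by rewrite /zcoef /= ?addr0 ?add0r.
Qed.

Lemma zA2_homog : homog 2 (zA2 K).
Proof. by move=> w size_w; rewrite zA2E; apply: homog_lmul2 sone_homog _ size_w. Qed.

Lemma smul_y3 (g : series) w : smul (y3 K) g w = lmul1 y3coef g w.
Proof.
rewrite (smul_homogl _ _ (gen_homog _)); case: w => [|x u] //=.
by rewrite take0 drop0 -[gen K 2]/(y3 K) y3E /= /sone mulr1.
Qed.

Lemma smul_zA2 (g : series) w : smul (zA2 K) g w = lmul2 zcoef g w.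
Proof.
rewrite (smul_homogl _ _ zA2_homog); case: w => [|x [|y u]] //=.
by rewrite zA2E /= take0 drop0 /sone mulr1.
Qed.

Lemma lmul1_lmul2 (g : series) w :
  lmul1 y3coef (lmul2 zcoef g) w =
  lmul2 zcoef (lmul1 y3coef g) w + lmul3 (dcoef2 qcoef) g w.
Proof.
case: w => [|x [|y [|z u]]] /=; [ring | ring | ring | by rewrite mulrA y3coef_zcoef; ring].
Qed.

Definition zpow j : series := iter j (lmul2 zcoef) (sone K).
Definition mon n : series := if odd n then lmul1 y3coef (zpow n./2) else zpow n./2.

Lemma spow_zA2 j w : spow (zA2 K) j w = zpow j w.
Proof. by elim: j w => [|j IHj] w //=; rewrite /spow /= smul_zA2; apply: lmul2_ext. Qed.

Lemma monA2E n w : monA2 K n w = mon n w.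
Proof.
rewrite /monA2 /mon; case: odd; last exact: spow_zA2.
by rewrite smul_y3; apply: lmul1_ext => u; apply: spow_zA2.
Qed.

Lemma zpow_homog j : homog j.*2 (zpow j).
Proof. by elim: j => [|j IHj]; [exact: sone_homog | rewrite doubleS; apply: homog_lmul2]. Qed.

Lemma mon_homog n : homog n (mon n).
Proof.
rewrite /mon -{1}(odd_double_half n); case: odd.
  exact/homog_lmul1/zpow_homog.
exact: zpow_homog.
Qed.

Lemma zpow_cocycle j w : dA2 (zpow j) w = 0.
Proof.
elim: j w => [|j IHj] w; first exact/dA2_homog0/sone_homog.
by rewrite /= dA2_lmul2 lmul3_eq0l ?lmul2_eq0r ?addr0 //; exact: dcoef2_zcoef.
Qed.

Lemma mon_cocycle n w : dA2 (mon n) w = 0.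
Proof.
rewrite /mon; case: odd; last exact: zpow_cocycle.
rewrite dA2_lmul1 lmul2_eq0l ?lmul1_eq0r ?subr0 //; first exact: zpow_cocycle.
exact: dcoef1_y3coef.
Qed.

Fixpoint alt_word n (b : bool) : word :=
  if n is n'.+1 then (if b then a3 else a2) :: alt_word n' (~~ b) else [::].

Lemma dA2_alt_word n b (g : series) : dA2 g (alt_word n b) = 0.
Proof.
elim: n b g => [|[|n] IHn] b g; rewrite ?dA2_nil ?dA2_1 //=.
by rewrite dA2_cons2 IHn subr0; case: b.
Qed.

Lemma zpow_alt_word j b : zpow j (alt_word j.*2 b) = 1.
Proof.
elim: j b => [|j IHj] b //=; rewrite IHj mulr1.
by case: b.
Qed.

Lemma mon_alt_word n : mon n (alt_word n true) = 1.
Proof.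
rewrite -[in alt_word n _](odd_double_half n) /mon; case: odd => /=.
  by rewrite zpow_alt_word mulr1.
exact: zpow_alt_word.
Qed.

Definition htpy (f : series) : series := fun w =>
  if w is x :: u then
    match nat_of_ord x with
    | 0 => f [:: a3, a3 & u] | 1 => f [:: a3, a1 & u] | _ => 0
    end
  else 0.

Definition zquot (f : series) : series := fun u => f [:: a3, a2 & u].

Lemma htpy_identity (f : series) a b r :
  f [:: a, b & r] = lmul2 zcoef (zquot f) [:: a, b & r]
                    + dA2 (htpy f) [:: a, b & r] + htpy (dA2 f) [:: a, b & r].
Proof.
case: (ord3P a) => [->|[->|->]]; case: (ord3P b) => [->|[->|->]];
  rewrite /= !dA2_cons2 /dlead /zquot /lquot /zcoef /= ?(@dA2_eq0 (fun _ => 0)) //.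
all: ring.
Qed.

Lemma zquot_dA2 (f : series) u : zquot (dA2 f) u = dA2 (zquot f) u.
Proof.
rewrite /zquot dA2_cons2 /dlead /=.
case: u => [|x u]; first by rewrite dA2_1 dA2_nil subr0.
by rewrite dA2_cons2 /dlead /lquot; case: (ord3P x) => [->|[->|->]] /=; ring.
Qed.

Lemma htpy_homog m (f : series) : homog m.+2 f -> homog m.+1 (htpy f).
Proof.
move=> hf [|x u] //= size_u; case: (nat_of_ord x) => [|[|?]] //;
  by rewrite hf //= => -[eq_m]; apply: size_u; rewrite /= eq_m.
Qed.

Lemma zquot_homog m (f : series) : homog m.+2 f -> homog m (zquot f).
Proof. by move=> hf u size_u; rewrite /zquot hf //= => -[]. Qed.

Lemma cocycle_htpy m (f : series) : cocycle m.+2 f ->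
  forall w, f w = lmul2 zcoef (zquot f) w + dA2 (htpy f) w.
Proof.
move=> [hf df0] [|a [|b r]].
- by rewrite hf // dA2_nil addr0.
- by rewrite hf // dA2_1 addr0.
rewrite {1}htpy_identity [htpy (dA2 f) _]/htpy.
by case: (nat_of_ord a) => [|[|]]; rewrite ?df0 addr0.
Qed.

(* d (q z^k) = y3 z^(k+1) - z y3 z^k for q = y1 y2 + y2 y1, as d q = y3 z - z y3. *)
Definition comm_primitive m : series :=
  if odd m then lmul2 qcoef (zpow m./2) else szero K.

Lemma comm_primitive_homog m : homog m.+1 (comm_primitive m).
Proof.
rewrite /comm_primitive -{1}(odd_double_half m); case: odd => //.
exact/homog_lmul2/zpow_homog.
Qed.

Lemma monSS m w : mon m.+2 w = lmul2 zcoef (mon m) w + dA2 (comm_primitive m) w.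
Proof.
rewrite /mon /comm_primitive /= negbK; case: odd; last by rewrite dA2_eq0 ?addr0.
by rewrite dA2_lmul2 (@lmul2_eq0r _ _ w (zpow_cocycle _)) addr0 lmul1_lmul2.
Qed.

(* For n = 0 the primitive g has degree n.-1 = 0, so d g = 0 and g is replaced by 0. *)
Lemma lmul2_primitive n c (g : series) : homog n.-1 g ->
  exists g' : series, homog n.+1 (lmul2 c g') /\ forall w, dA2 g' w = dA2 g w.
Proof.
case: n => [|n] hg; last by exists g; split=> //; apply: homog_lmul2.
exists (szero K); split=> [w _|w]; first exact: lmul2_eq0r.
by rewrite dA2_eq0 // dA2_homog0.
Qed.

Lemma coboundary_ext n (f g : series) :
  (forall w, f w = g w) -> coboundary n f -> coboundary n g.
Proof. by move=> eq_fg [h [h_homog dh]]; exists h; split=> // w; rewrite -eq_fg. Qed.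

Definition mon_spans n := forall f : series, cocycle n f ->
  exists c : K, cohomologous n f (sscale c (mon n)).

Lemma mon_spans0 : mon_spans 0.
Proof.
move=> f [hf _]; exists (f [::]), (szero K); split=> // w.
rewrite dA2_eq0 // /ssub /sscale /mon /= /sone.
case: w => [|x u] /=; first by rewrite mulr1 subrr.
by rewrite hf // mulr0 subrr.
Qed.

Lemma mon_spans1 : mon_spans 1.
Proof.
move=> f [hf df0]; exists (f [:: a3]), (szero K); split=> // w.
have f_a1 : f [:: a1] = 0 by have := df0 [:: a3; a3]; rewrite dA2_cons2 dA2_1 subr0.
have f_a2 : f [:: a2] = 0 by have := df0 [:: a1; a3]; rewrite dA2_cons2 dA2_1 subr0.
rewrite dA2_eq0 // /ssub /sscale /mon /= /sone.
case: w => [|x [|y u]] /=; last by rewrite (hf [:: x, y & u]) // !mulr0 subr0.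
  by rewrite (hf [::]) // mulr0 subr0.
rewrite mulr1; case: (ord3P x) => [->|[->|->]];
  by rewrite ?f_a1 ?f_a2 /y3coef /= ?mulr0 ?mulr1 subrr.
Qed.

Lemma mon_spansSS m : mon_spans m -> mon_spans m.+2.
Proof.
move=> IHm f [hf df0].
have zquot_cocycle : cocycle m (zquot f).
  by split=> [|u]; [exact: zquot_homog | rewrite -zquot_dA2 /zquot df0].
have [c [g [hg dg]]] := IHm _ zquot_cocycle.
have [g' [hg' dg']] := lmul2_primitive zcoef hg.
exists c, (sadd (lmul2 zcoef g') (sadd (htpy f) (sscale (- c) (comm_primitive m)))).
split.
  apply/homog_sadd/homog_sadd => //; first exact: htpy_homog.
  exact/homog_sscale/comm_primitive_homog.
have zquot_fE w :
    lmul2 zcoef (zquot f) w = c * lmul2 zcoef (mon m) w + lmul2 zcoef (dA2 g') w.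
  by case: w => [|x [|y u]] /=; rewrite ?mulr0 ?addr0 // dg' -dg /ssub /sscale; ring.
move=> w; rewrite /ssub /sscale (cocycle_htpy (conj hf df0)) monSS zquot_fE.
rewrite !dA2_sadd dA2_sscale dA2_lmul2 lmul3_eq0l; last exact: dcoef2_zcoef.
ring.
Qed.

Lemma mon_spans_all n : mon_spans n.
Proof.
elim/ltn_ind: n => -[|[|m]] IHn; [exact: mon_spans0 | exact: mon_spans1 |].
exact/mon_spansSS/IHn.
Qed.

Lemma y3_cocycle : cocycle 1 (y3 K).
Proof.
split=> [|w]; first exact: gen_homog.
by rewrite (@dA2_ext _ (mon 1) _ y3E) mon_cocycle.
Qed.

Lemma zA2_cocycle : cocycle 2 (zA2 K).
Proof.
split=> [|w]; first exact: zA2_homog.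
by rewrite (@dA2_ext _ (mon 2) _ zA2E) mon_cocycle.
Qed.

Lemma y3_sq_cohomologous0 : cohomologous 2 (smul (y3 K) (y3 K)) (szero K).
Proof.
exists (y1 K); split=> [|w]; first exact: gen_homog.
rewrite /ssub /szero subr0 smul_gen.
case: w => [|a [|b [|c u]]]; rewrite ?dA2_nil ?dA2_1 //.
- by rewrite eqseq_cons andbF.
- rewrite dA2_cons2 dA2_1 subr0 /dlead /y1 /gen.
  by case: (ord3P a) => [->|[->|->]]; case: (ord3P b) => [->|[->|->]].
rewrite (@dA2_homog 1) //; last exact: gen_homog.
by have -> : ([:: a, b, c & u] == [:: 2; 2]) = false by apply/eqP; case.
Qed.

Lemma y3_zA2_commute : cohomologous 3 (smul (y3 K) (zA2 K)) (smul (zA2 K) (y3 K)).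
Proof.
exists (lmul2 qcoef (sone K)); split=> [|w]; first exact/homog_lmul2/sone_homog.
rewrite /ssub dA2_lmul2 (@lmul2_eq0r _ _ w (fun u => dA2_homog0 u sone_homog)) addr0.
rewrite smul_y3 smul_zA2 (lmul1_ext _ _ zA2E) (lmul2_ext _ _ y3E) lmul1_lmul2.
ring.
Qed.

Lemma monA2_cocycle n : cocycle n (monA2 K n).
Proof.
split=> [w size_w|w]; first by rewrite monA2E mon_homog.
by rewrite (@dA2_ext _ (mon n) _ (monA2E n)) mon_cocycle.
Qed.

Lemma monA2_not_coboundary n : ~ coboundary n (monA2 K n).
Proof.
move=> [g [_ dg]]; move: (dg (alt_word n true)).
by rewrite monA2E mon_alt_word dA2_alt_word; apply/eqP; rewrite oner_eq0.
Qed.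

Lemma cocycle_monA2_cohomologous n (f : series) : cocycle n f ->
  exists c : K, cohomologous n f (sscale c (monA2 K n)).
Proof.
move=> /mon_spans_all [c cohom_f]; exists c; apply: coboundary_ext cohom_f => w.
by rewrite /ssub /sscale monA2E.
Qed.

End FreeAlgebra.

Unset Implicit Arguments.
Set Strict Implicit.

Theorem proposition3p1 (K : closedFieldType) (char0 : [pchar K] =i pred0) :
  cocycle 1 (y3 K) /\ cocycle 2 (zA2 K) /\
  cohomologous 2 (smul (y3 K) (y3 K)) (szero K) /\
  cohomologous 3 (smul (y3 K) (zA2 K)) (smul (zA2 K) (y3 K)) /\
  (forall n : nat,
     cocycle n (monA2 K n) /\ ~ coboundary n (monA2 K n) /\
     forall f : series K, cocycle n f ->
       exists c : K, cohomologous n f (sscale c (monA2 K n))).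
Proof.
split; first exact: y3_cocycle.
split; first exact: zA2_cocycle.
split; first exact: y3_sq_cohomologous0.
split; first exact: y3_zA2_commute.
move=> n; split; first exact: monA2_cocycle.
split; first exact: monA2_not_coboundary.
exact: cocycle_monA2_cohomologous.
Qed.
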